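(* Let $X=\{x_0,\ldots,x_m\}$, $\tilde X=\{\tilde x_1,\ldots,\tilde x_q\}$ (commuting), $c\in\mathbb{R}^q\langle\langle X\rangle\rangle$ proper and $d\in\mathbb{R}^m[[\tilde X]]$ purely improper. Then the series $c\,\tilde\circ\,\delta_{(d^{-1}\circ c)^{\circ-1}}$ is a proper series in $\mathbb{R}^q\langle\langle X\rangle\rangle$ and is the unique fixed point of the map $e\mapsto c\,\tilde\circ\,\delta_{(d\circ e)}$ on the proper series of $\mathbb{R}^q\langle\langle X\rangle\rangle$, where $\circ$ between $d$ (or $d^{-1}$) and a noncommutative series denotes the Wiener-Fliess composition product.
   Context: $\mathbb{R}^\ell\langle\langle X\rangle\rangle$: formal power series in noncommuting letters with coefficients in $\mathbb{R}^\ell$; proper means zero constant term; purely improper means each component has nonzero constant term; componentwise products. $\mathbb{R}^m[[\tilde X]]$: formal power series in commuting letters with coefficients in $\mathbb{R}^m$; $d^{-1}$ is the componentwise Cauchy (multiplicative) inverse of purely improper $d$. Shuffle product $\sqcup\!\sqcup$: bilinear, $(x_i\eta)\sqcup\!\sqcup(x_j\xi)=x_i(\eta\sqcup\!\sqcup x_j\xi)+x_j(x_i\eta\sqcup\!\sqcup\xi)$, $\eta\sqcup\!\sqcup\emptyset=\emptyset\sqcup\!\sqcup\eta=\eta$; $g^{\sqcup\!\sqcup-1}$ the componentwise shuffle inverse. Wiener-Fliess composition for proper $e\in\mathbb{R}^q\langle\langle X\rangle\rangle$: $d\circ e=\sum_{\tilde\eta\in\tilde X^\ast}(d,\tilde\eta)e^{\sqcup\!\sqcup\tilde\eta}$,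 $e^{\sqcup\!\sqcup\emptyset}=1$, $e^{\sqcup\!\sqcup\tilde x_i\tilde\eta}=e_i\sqcup\!\sqcup e^{\sqcup\!\sqcup\tilde\eta}$. Multiplicative mixed composition of $c\in\mathbb{R}^q\langle\langle X\rangle\rangle$ and $g\in\mathbb{R}^m\langle\langle X\rangle\rangle$: $c\,\tilde\circ\,\delta_g=\sum_{\eta\in X^\ast}(c,\eta)\bar\phi_g(\eta)(\mathbf 1)$, $\mathbf 1=1\emptyset$, $\bar\phi_g(x_0)(w)=x_0w$, $\bar\phi_g(x_i)(w)=x_i(g_i\sqcup\!\sqcup w)$ ($i\ge1$), extended multiplicatively (concatenation to composition). For purely improper $g\in\mathbb{R}^m\langle\langle X\rangle\rangle$, $g^{\circ-1}$ is the unique $h\in\mathbb{R}^m\langle\langle X\rangle\rangle$ with $h=g^{\sqcup\!\sqcup-1}\,\tilde\circ\,\delta_h$. *)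

From HB Require Import structures.
From mathcomp Require Import all_boot all_order all_algebra.
From mathcomp Require Import reals.
From Stdlib Require Import ClassicalEpsilon.
Set Implicit Arguments. Unset Strict Implicit. Unset Printing Implicit Defensive.
Import GRing.Theory Num.Theory.
Local Open Scope ring_scope.

(* An R^l-valued series is a function 'I_l -> ser R A (componentwise). *)
Section NCSeries.
Variable R : realType.
Variable A : finType.

Definition ser := seq A -> R.

Definition one : ser := fun w => if w is [::] then 1 else 0.

Definition lcons (a : A) (s : ser) : ser :=
  fun w => if w is b :: w' then (if b == a then s w' else 0) else 0.

(* shuffle of two words, as a list of words with multiplicities:
   u ⧢ [] = [] ⧢ u = u, (a u) ⧢ (b v) = a (u ⧢ b v) + b (a u ⧢ v) *)
Fixpoint shw (u v : seq A) {struct u} : seq (seq A) :=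
  match u with
  | [::] => [:: v]
  | a :: u' =>
    (fix shv (v : seq A) : seq (seq A) :=
       match v with
       | [::] => [:: u]
       | b :: v' => map (cons a) (shw u' v) ++ map (cons b) (shv v')
       end) v
  end.

(* bilinear extension of the shuffle to series; only pairs of words
   whose lengths add up to |w| can produce w *)
Definition shuffle (s t : ser) : ser := fun w =>
  \sum_(k < (size w).+1) \sum_(u : k.-tuple A) \sum_(v : (size w - k).-tuple A)
     (s u * t v) *+ count_mem w (shw u v).

Definition shpow (s : ser) (n : nat) : ser := iter n (shuffle s) one.

Definition shinv (l : nat) (g : 'I_l -> ser) : 'I_l -> ser :=
  fun j => epsilon (inhabits (fun _ : seq A => 0 : R))
                   (fun h => shuffle (g j) h = one).

Definition proper_ser (l : nat) (c : 'I_l -> ser) : Prop :=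
  forall j, c j [::] = 0.

Definition purely_improper (l : nat) (c : 'I_l -> ser) : Prop :=
  forall j, c j [::] != 0.

End NCSeries.

Section CSeries.
Variable R : realType.
Variable q : nat.

Definition mono := {ffun 'I_q -> nat}.
Definition cser := mono -> R.
Definition deg (a : mono) : nat := (\sum_(i < q) a i)%N.
Definition natf (n : nat) (b : {ffun 'I_q -> 'I_n}) : mono :=
  [ffun i => nat_of_ord (b i)].

Definition cone : cser := fun a => if a == [ffun => 0%N] then 1 else 0.

Definition cmul (d h : cser) : cser := fun a =>
  \sum_(b : {ffun 'I_q -> 'I_(deg a).+1} | [forall i, (b i <= a i)%N])
     d (natf b) * h [ffun i => (a i - b i)%N].

Definition cinv (l : nat) (d : 'I_l -> cser) : 'I_l -> cser :=
  fun j => epsilon (inhabits (fun _ : mono => 0 : R))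
                   (fun h => cmul (d j) h = cone).

Definition cpurely_improper (l : nat) (d : 'I_l -> cser) : Prop :=
  forall j, d j [ffun => 0%N] != 0.

End CSeries.

(* Compositions; alphabet X = {x_0,...,x_m} is 'I_m.+1                 *)
Section Compositions.
Variable R : realType.

Definition shmono (A : finType) (q : nat) (e : 'I_q -> ser R A) (a : mono q)
  : ser R A :=
  foldr (fun i acc => shuffle (shpow (e i) (a i)) acc) (@one R A) (enum 'I_q).

(* Wiener-Fliess composition d o e = sum_a (d,a) e^{⧢ a}, for proper e;
   at a word w only monomials of degree <= |w| contribute (e proper),
   and all of them have every exponent <= |w|. *)
Definition wfcomp (A : finType) (m q : nat) (d : 'I_m -> cser R q)
  (e : 'I_q -> ser R A) : 'I_m -> ser R A := fun j w =>
  \sum_(a : {ffun 'I_q -> 'I_(size w).+1}) d j (natf a) * shmono e (natf a) w.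

(* bar phi_g(eta)(1): x_0 w |-> x_0 w, x_i w |-> x_i (g_i ⧢ w), i >= 1;
   letter i >= 1 of 'I_m.+1 corresponds to component i-1 of g : 'I_m -> _ *)
Definition phibar (m : nat) (g : 'I_m -> ser R 'I_m.+1) (eta : seq 'I_m.+1)
  : ser R 'I_m.+1 :=
  foldr (fun a acc => match unlift ord0 a with
                      | None => lcons a acc
                      | Some i => lcons a (shuffle (g i) acc)
                      end) (@one R 'I_m.+1) eta.

(* multiplicative mixed composition c ~o delta_g = sum_eta (c,eta) phibar_g(eta)(1);
   phibar_g(eta)(1) is supported on words of length >= |eta| *)
Definition mixcomp (m q : nat) (c : 'I_q -> ser R 'I_m.+1)
  (g : 'I_m -> ser R 'I_m.+1) : 'I_q -> ser R 'I_m.+1 := fun j w =>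
  \sum_(k < (size w).+1) \sum_(eta : k.-tuple 'I_m.+1) c j eta * phibar g eta w.

Definition compinv (m : nat) (g : 'I_m -> ser R 'I_m.+1) : 'I_m -> ser R 'I_m.+1 :=
  epsilon (inhabits (fun (_ : 'I_m) (_ : seq 'I_m.+1) => 0 : R))
          (fun h => h = mixcomp (shinv g) h).

End Compositions.

(* Put g := d^{-1} o c and h := g^{o-1}, so that f = c ~o delta_h.  For fixed h,
   s |-> s ~o delta_h is a morphism of shuffle algebras; hence it commutes with
   Wiener-Fliess composition: (d o c) ~o delta_h = d o (c ~o delta_h) for proper c.
   Moreover e |-> d o e turns Cauchy products into shuffles, so
   (d o c) ⧢ (d^{-1} o c) = (d d^{-1}) o c = 1 and the shuffle inverse of g is d o c.
   The defining equation of h therefore reads h = (d o c) ~o delta_h = d o f, that is,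
   f = c ~o delta_(d o f).
   The Cauchy inverse, the composition inverse and the uniqueness of the fixed point
   all come from one principle: a map whose value at a word (or monomial) depends
   only on its argument at strictly shorter words (smaller monomials) has exactly
   one fixed point, and c ~o delta_g at a word w only reads g on words shorter
   than w. *)

From Pilot Require Import Defs.
From mathcomp Require Import all_boot all_algebra.
From mathcomp Require Import reals boolp lra zify.
From Stdlib Require Import ClassicalEpsilon.
Set Implicit Arguments. Unset Strict Implicit. Unset Printing Implicit Defensive.
Import GRing.Theory Num.Theory.
Local Open Scope ring_scope.

Section Shuffle.
Variable R : realType.
Variable A : finType.
Implicit Types s t : ser R A.
Local Notation one := (@Defs.one R A).

Fixpoint words (k : nat) : seq (seq A) :=
  if k is k'.+1 then [seq a :: u | a <- index_enum A, u <- words k'] else [:: [::]].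

Lemma size_words k u : u \in words k -> size u = k.
Proof.
elim: k u => [|k IH] u /=; first by rewrite inE => /eqP ->.
by case/allpairsPdep => a [v [_ Hv ->]] /=; rewrite (IH _ Hv).
Qed.

Lemma big_tuple_words k (F : seq A -> R) :
  \sum_(u : k.-tuple A) F u = \sum_(u <- words k) F u.
Proof.
elim: k F => [|k IH] F.
  rewrite /= big_seq1 (eq_bigr (fun _ => F [::])); last by move=> u _; rewrite tuple0.
  by rewrite big_const card_tuple expn0 /= addr0.
rewrite /= big_allpairs_dep /=.
have -> : \sum_(u : k.+1.-tuple A) F u = \sum_(p : A * k.-tuple A) F (p.1 :: p.2).
  rewrite (reindex (fun p : A * k.-tuple A => [tuple of p.1 :: val p.2])) //=.
  exists (fun u : k.+1.-tuple A => (thead u, [tuple of behead u])).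
    by move=> [a t] _ /=; congr pair; apply: val_inj.
  by move=> u _; apply: val_inj => /=; case: u => [[|x s]].
rewrite -(pair_big xpredT xpredT (fun a (t : k.-tuple A) => F (a :: t))) /=.
by apply: eq_bigr => a _; rewrite (IH (fun u => F (a :: u))).
Qed.

Lemma sum_if_eq (F : A -> R) a : \sum_(b <- index_enum A) (if a == b then F b else 0) = F a.
Proof. by rewrite -big_mkcond (big_pred1 a) // => b; rewrite /= eq_sym. Qed.

Definition lder (a : A) s : ser R A := fun w => s (a :: w).

Definition ssum (I : Type) (r : seq I) (P : pred I) (F : I -> ser R A) : ser R A :=
  fun u => \sum_(i <- r | P i) F i u.
Definition sscale (x : R) s : ser R A := fun u => x * s u.
Definition sadd s t : ser R A := fun u => s u + t u.

Lemma shuffle_words s t w : shuffle s t w =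
  \sum_(k < (size w).+1) \sum_(u <- words k) \sum_(v <- words (size w - k))
     (s u * t v) *+ count_mem w (shw u v).
Proof.
apply: eq_bigr => k _; rewrite -big_tuple_words; apply: eq_bigr => u _.
by rewrite -(big_tuple_words _ (fun v => (s u * t v) *+ count_mem w (shw u v))).
Qed.

Lemma shw_nilr (u : seq A) : shw u [::] = [:: u].
Proof. by case: u. Qed.

Lemma count_map_cons (a b : A) (w : seq A) (S : seq (seq A)) :
  count_mem (a :: w) (map (cons b) S) = ((b == a) * count_mem w S)%N.
Proof.
rewrite count_map; case: eqP => [->|ne] /=.
  by rewrite mul1n; apply: eq_count => x /=; rewrite eqseq_cons eqxx.
rewrite mul0n; apply/eqP; rewrite -leqn0 leqNgt -has_count; apply/hasPn => x _ /=.
by rewrite eqseq_cons; apply/nandP; left; apply/eqP => E; apply: ne.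
Qed.

Lemma count_shw_cons (a : A) (w u v : seq A) : count_mem (a :: w) (shw u v) =
  ((if u is b :: u' then (b == a) * count_mem w (shw u' v) else 0) +
   (if v is b :: v' then (b == a) * count_mem w (shw u v') else 0))%N.
Proof.
case: u => [|b u]; case: v => [|c v] /=.
- by [].
- by rewrite eqseq_cons; case: (c == a); case: (v == w).
- by rewrite shw_nilr /= eqseq_cons; case: (b == a); case: (u == w).
- by rewrite count_cat !count_map_cons.
Qed.

Lemma shuffle_nil s t : shuffle s t [::] = s [::] * t [::].
Proof. by rewrite shuffle_words /= big_ord1 /= !big_seq1. Qed.

Lemma shuffle_cons s t a w :
  shuffle s t (a :: w) = shuffle (lder a s) t w + shuffle s (lder a t) w.
Proof.
rewrite shuffle_words /=.
under eq_bigr => k _ do under eq_bigr => u _ do under eq_bigr => v _ do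
  rewrite count_shw_cons mulrnDr.
under eq_bigr => k _ do under eq_bigr => u _ do rewrite big_split /=.
under eq_bigr => k _ do rewrite big_split /=.
rewrite big_split /=; congr (_ + _).
- rewrite big_ord_recl /= big_seq1 big1 ?add0r; last by move=> v _; rewrite mulr0n.
  rewrite shuffle_words; apply: eq_bigr => k _.
  rewrite /bump /= add1n subSS big_allpairs_dep /=.
  rewrite exchange_big /=; apply: eq_bigr => u _.
  rewrite exchange_big /=; apply: eq_bigr => v _.
  rewrite -(sum_if_eq (fun b => (s (b :: u) * t v) *+ count_mem w (shw u v)) a).
  by apply: eq_bigr => b _; rewrite mulnC mulrnA mulrb eq_sym.
- rewrite big_ord_recr /= [X in _ + X]big1 ?addr0; last first.
    by move=> u _; rewrite subnn /= big_seq1 mulr0n.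
  rewrite shuffle_words; apply: eq_bigr => k _.
  rewrite subSn; last by rewrite -ltnS.
  apply: eq_bigr => u _.
  rewrite /= big_allpairs_dep /= exchange_big /=; apply: eq_bigr => v _.
  rewrite -(sum_if_eq (fun b => (s u * t (b :: v)) *+ count_mem w (shw u v)) a).
  by apply: eq_bigr => b _; rewrite mulnC mulrnA mulrb eq_sym.
Qed.

Lemma lder_shuffle a s t :
  lder a (shuffle s t) = sadd (shuffle (lder a s) t) (shuffle s (lder a t)).
Proof. by apply: funext => w; rewrite /lder shuffle_cons. Qed.

Definition eq_below (n : nat) s t := forall u, (size u < n)%N -> s u = t u.

Lemma shuffle_local n s1 s2 t1 t2 : eq_below n s1 s2 -> eq_below n t1 t2 ->
  eq_below n (shuffle s1 t1) (shuffle s2 t2).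
Proof.
move=> Hs Ht u; elim: u n s1 s2 t1 t2 Hs Ht => [|a u IH] [|n] s1 s2 t1 t2 Hs Ht //= Hu.
  by rewrite !shuffle_nil Hs ?Ht.
rewrite !shuffle_cons; congr (_ + _); apply: (IH n) => // v Hv; rewrite /lder.
all: first [apply: Hs | apply: Ht] => /=; lia.
Qed.

Lemma shuffleC s t : shuffle s t = shuffle t s.
Proof.
apply: funext => w; elim: w s t => [|a w IH] s t; first by rewrite !shuffle_nil mulrC.
by rewrite !shuffle_cons IH addrC IH.
Qed.

Lemma shuffle_suml I r P F t :
  shuffle (@ssum I r P F) t = ssum r P (fun i => shuffle (F i) t).
Proof.
apply: funext => w; elim: w F t => [|a w IH] F t.
  by rewrite shuffle_nil mulr_suml; apply: eq_bigr => i _; rewrite shuffle_nil.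
rewrite shuffle_cons [lder a _]/lder !IH -big_split /=.
by apply: eq_bigr => i _; rewrite shuffle_cons.
Qed.

Lemma shuffle_sumr I r P F t :
  shuffle t (@ssum I r P F) = ssum r P (fun i => shuffle t (F i)).
Proof.
by rewrite shuffleC shuffle_suml; apply: funext => w; apply: eq_bigr => i _; rewrite shuffleC.
Qed.

Lemma shuffle_scalel x s t : shuffle (sscale x s) t = sscale x (shuffle s t).
Proof.
apply: funext => w; rewrite /sscale; elim: w s t => [|a w IH] s t.
  by rewrite !shuffle_nil mulrA.
by rewrite !shuffle_cons [lder a _]/lder !IH mulrDr.
Qed.

Lemma shuffle_scaler x s t : shuffle t (sscale x s) = sscale x (shuffle t s).
Proof. by rewrite shuffleC shuffle_scalel shuffleC. Qed.

Lemma shuffle_addl s1 s2 t :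
  shuffle (sadd s1 s2) t = sadd (shuffle s1 t) (shuffle s2 t).
Proof.
apply: funext => w; rewrite /sadd; elim: w s1 s2 t => [|a w IH] s1 s2 t.
  by rewrite !shuffle_nil mulrDl.
by rewrite !shuffle_cons [lder a (sadd _ _)]/lder !IH; lra.
Qed.

Lemma shuffle_addr s1 s2 t :
  shuffle t (sadd s1 s2) = sadd (shuffle t s1) (shuffle t s2).
Proof. by rewrite shuffleC shuffle_addl !(shuffleC t). Qed.

Lemma shuffle1s s : shuffle one s = s.
Proof.
apply: funext => w; elim: w s => [|a w IH] s; first by rewrite shuffle_nil mul1r.
rewrite shuffle_cons.
have -> : lder a one = sscale 0 one by apply: funext => u; rewrite /sscale mul0r.
by rewrite shuffle_scalel IH /sscale mul0r add0r.
Qed.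

Lemma shuffleA s t u : shuffle (shuffle s t) u = shuffle s (shuffle t u).
Proof.
apply: funext => w; elim: w s t u => [|a w IH] s t u; first by rewrite !shuffle_nil mulrA.
by rewrite !shuffle_cons !lder_shuffle shuffle_addl shuffle_addr /sadd !IH; lra.
Qed.

Lemma shuffleACA s t u v :
  shuffle (shuffle s t) (shuffle u v) = shuffle (shuffle s u) (shuffle t v).
Proof. by rewrite !shuffleA -(shuffleA t) (shuffleC t u) shuffleA. Qed.

Definition vanishes_below (k : nat) s := forall w, (size w < k)%N -> s w = 0.

Lemma vanishes_below_shuffle i j s t :
  vanishes_below i s -> vanishes_below j t -> vanishes_below (i + j) (shuffle s t).
Proof.
move=> Hs Ht w; elim: w i j s t Hs Ht => [|a w IH] i j s t Hs Ht /= Hw.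
  rewrite shuffle_nil; case: i Hs Hw => [|i] Hs Hw; first by rewrite Ht ?mulr0.
  by rewrite Hs ?mul0r.
rewrite shuffle_cons (IH i.-1 j) ?add0r; first last.
- by case: i Hs Hw => [|i] Hs Hw /=; lia.
- by [].
- by move=> u Hu; apply: Hs => /=; lia.
rewrite (IH i j.-1) //.
- by move=> u Hu; apply: Ht => /=; lia.
- by case: j Ht Hw => [|j] Ht Hw /=; lia.
Qed.

End Shuffle.

Local Notation box q K := {ffun 'I_q -> 'I_K.+1}.

Section Monomials.
Variable q : nat.
Implicit Types x y z : mono q.

Definition madd x y : mono q := [ffun i => (x i + y i)%N].
Definition msub x y : mono q := [ffun i => (x i - y i)%N].

Lemma natf_inj K : injective (@natf q K).
Proof.
move=> b1 b2 E; apply/ffunP => i; apply: val_inj.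
by have := congr1 (fun f : mono q => f i) E; rewrite !ffunE.
Qed.

Lemma natf_le K (b : box q K) i : (natf b i <= K)%N.
Proof. by rewrite ffunE -ltnS ltn_ord. Qed.

Lemma natf0 K : natf ([ffun => ord0] : box q K) = [ffun => 0%N].
Proof. by apply/ffunP => i; rewrite !ffunE. Qed.

Lemma mono_le_deg x i : (x i <= deg x)%N.
Proof. by rewrite /deg (bigD1 i) //= leq_addr. Qed.

Lemma deg_msub x y : (forall i, y i <= x i)%N -> (deg (msub x y) + deg y)%N = deg x.
Proof.
by move=> H; rewrite /deg -big_split /=; apply: eq_bigr => i _; rewrite ffunE subnK.
Qed.

Lemma eq_madd x y z : (x == madd y z) = [forall i, (y i <= x i)%N] && (z == msub x y).
Proof.
apply/eqP/andP => [->|[/forallP H /eqP ->]].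
  split; first by apply/forallP => i; rewrite ffunE leq_addr.
  by apply/eqP/ffunP => i; rewrite !ffunE addKn.
by apply/ffunP => i; rewrite !ffunE subnKC.
Qed.

Section BoxSums.
Variable V : nmodType.

Lemma sum_box_eq K x (F : mono q -> V) :
  \sum_(b : box q K) (if natf b == x then F (natf b) else 0) =
  if [forall i, (x i <= K)%N] then F x else 0.
Proof.
case: forallP => H; last first.
  by rewrite big1 // => b _; case: eqP => // E; case: H => i; rewrite -E natf_le.
pose b0 : box q K := [ffun i => inord (x i)].
have Hb0 : natf b0 = x by apply/ffunP => i; rewrite !ffunE inordK // ltnS H.
rewrite (bigD1 b0) //= Hb0 eqxx big1 ?addr0 // => b Hb.
by case: eqP => // E; rewrite -Hb0 in E; move/natf_inj: E Hb => ->; rewrite eqxx.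
Qed.

Lemma sum_box_resize K K' (G : mono q -> V) :
  (forall x, G x != 0 -> forall i, (x i <= K)%N && (x i <= K')%N) ->
  \sum_(b : box q K) G (natf b) = \sum_(b : box q K') G (natf b).
Proof.
move=> HG.
have reindex K1 K2 (b : box q K1) : (G (natf b) != 0 -> forall i, (natf b i <= K2)%N) ->
    G (natf b) = \sum_(b' : box q K2) (if natf b' == natf b then G (natf b') else 0).
  move=> Hb; rewrite sum_box_eq; case: forallP => // H.
  by case: (G (natf b) =P 0) => // /eqP nz; case: H; apply: Hb.
transitivity (\sum_(b : box q K) \sum_(b' : box q K')
                (if natf b' == natf b then G (natf b') else 0)).
  by apply: eq_bigr => b _; apply: reindex => nz i; case/andP: (HG _ nz i).
rewrite exchange_big; apply: eq_bigr => b' _.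
rewrite [RHS](reindex _ K) => [|nz i]; last by case/andP: (HG _ nz i).
by apply: eq_bigr => b _; rewrite eq_sym; case: eqP => [->|].
Qed.

End BoxSums.
End Monomials.

Section ShuffleMonomials.
Variable R : realType.
Variable A : finType.
Variable q : nat.
Local Notation one := (@Defs.one R A).
Implicit Types (s : ser R A) (e : 'I_q -> ser R A) (al be : mono q).

Lemma shpow0 s : shpow s 0 = one.
Proof. by []. Qed.

Lemma shpowS s k : shpow s k.+1 = shuffle s (shpow s k).
Proof. by []. Qed.

Lemma shpowD s k l : shpow s (k + l) = shuffle (shpow s k) (shpow s l).
Proof.
elim: k => [|k IH]; first by rewrite add0n shpow0 shuffle1s.
by rewrite addSn !shpowS IH shuffleA.
Qed.

Lemma vanishes_below_shpow s k : vanishes_below 1 s -> vanishes_below k (shpow s k).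
Proof.
move=> Hs; elim: k => [|k IH]; first by move=> w.
by rewrite shpowS -add1n; apply: vanishes_below_shuffle.
Qed.

Lemma shpow_local n s1 s2 k : eq_below n s1 s2 -> eq_below n (shpow s1 k) (shpow s2 k).
Proof. by move=> H; elim: k => [|k IH] //; rewrite !shpowS; apply: shuffle_local. Qed.

Lemma shmono0 e : shmono e [ffun => 0%N] = one.
Proof.
by rewrite /shmono; elim: (enum 'I_q) => [|i l IH] //=; rewrite IH ffunE shpow0 shuffle1s.
Qed.

Lemma shmonoD e al be : shmono e (madd al be) = shuffle (shmono e al) (shmono e be).
Proof.
rewrite /shmono; elim: (enum 'I_q) => [|i l IH] /=; first by rewrite shuffle1s.
by rewrite IH ffunE shpowD shuffleACA.
Qed.

Lemma vanishes_below_shmono e al :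
  (forall i, vanishes_below 1 (e i)) -> vanishes_below (deg al) (shmono e al).
Proof.
move=> He; rewrite /deg -big_enum /shmono; elim: (enum 'I_q) => [|i l IH] /=.
  by rewrite big_nil => w.
by rewrite big_cons; apply: vanishes_below_shuffle => //; apply: vanishes_below_shpow.
Qed.

Lemma shmono_local n e1 e2 al : (forall i, eq_below n (e1 i) (e2 i)) ->
  eq_below n (shmono e1 al) (shmono e2 al).
Proof.
move=> H; rewrite /shmono; elim: (enum 'I_q) => [|i l IH] //=.
by apply: shuffle_local => //; apply: shpow_local.
Qed.

End ShuffleMonomials.

Section MixedComposition.
Variable R : realType.
Variable m : nat.
Local Notation X := 'I_m.+1.
Local Notation one := (@Defs.one R X).
Implicit Types (c s t : ser R X) (g : 'I_m -> ser R X).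

Definition mixcomp1 c g : ser R X := fun w =>
  \sum_(k < (size w).+1) \sum_(eta <- words X k) c eta * phibar g eta w.

Lemma mixcompE q (c : 'I_q -> ser R X) g j : mixcomp c g j = mixcomp1 (c j) g.
Proof.
apply: funext => w; apply: eq_bigr => k _.
by rewrite -(big_tuple_words _ (fun eta => c j eta * phibar g eta w)).
Qed.

Lemma phibar_cons g b eta : phibar g (b :: eta) =
  lcons b (if unlift ord0 b is Some i then shuffle (g i) (phibar g eta)
           else phibar g eta).
Proof. by rewrite /phibar /=; case: (unlift ord0 b). Qed.

Lemma vanishes_below_phibar g eta : vanishes_below (size eta) (phibar g eta).
Proof.
elim: eta => [|b eta IH] w //; rewrite phibar_cons; case: w => [|a w] //= Hw.
case: (a == b) => //; case: (unlift ord0 b) => [i|]; last exact: IH.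
by apply: (vanishes_below_shuffle (i := 0)) Hw.
Qed.

Lemma phibar_local n g1 g2 eta : (forall i, eq_below n (g1 i) (g2 i)) ->
  eq_below n.+1 (phibar g1 eta) (phibar g2 eta).
Proof.
move=> H; elim: eta => [|b eta IH] // w; rewrite !phibar_cons; case: w => [|a w] //= Hw.
case: (a == b) => //; case: (unlift ord0 b) => [i|]; last by apply: IH; apply: ltnW.
by apply: (shuffle_local (n := n)) => [u Hu|u Hu|]; [apply: H | apply: IH; apply: ltnW |].
Qed.

Lemma mixcomp1_widen c g w N : (size w <= N)%N ->
  mixcomp1 c g w = \sum_(k < N.+1) \sum_(eta <- words X k) c eta * phibar g eta w.
Proof.
move=> HN; rewrite /mixcomp1.
rewrite (big_ord_widen N.+1 (fun k => \sum_(eta <- words X k) c eta * phibar g eta w)) //.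
rewrite big_mkcond; apply: eq_bigr => k _ /=.
case: ifP => // Hk; rewrite big_seq big1 // => eta Heta.
by rewrite vanishes_below_phibar ?mulr0 // (size_words Heta) ltnNge -ltnS Hk.
Qed.

Lemma mixcomp1_nil c g : mixcomp1 c g [::] = c [::].
Proof. by rewrite /mixcomp1 /= big_ord1 big_seq1 /= mulr1. Qed.

Lemma mixcomp1_cons c g a w : mixcomp1 c g (a :: w) =
  if unlift ord0 a is Some i then shuffle (g i) (mixcomp1 (lder a c) g) w
  else mixcomp1 (lder a c) g w.
Proof.
rewrite /mixcomp1 /= big_ord_recl /= big_seq1 /= mulr0 add0r.
under eq_bigr => k _ do rewrite big_allpairs_dep /= exchange_big /=.
pose phi eta := if unlift ord0 a is Some i then shuffle (g i) (phibar g eta)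
                else phibar g eta.
have Ea eta : \sum_(b <- index_enum X) c (b :: eta) * phibar g (b :: eta) (a :: w) =
              c (a :: eta) * phi eta w.
  rewrite -(sum_if_eq (fun b => c (b :: eta) * phi eta w) a).
  apply: eq_bigr => b _; rewrite phibar_cons /lcons /=.
  by case: eqP => [<-|]; rewrite ?mulr0.
under eq_bigr => k _ do under eq_bigr => eta _ do rewrite Ea.
rewrite /phi; case: (unlift ord0 a) => [i|] //.
transitivity (shuffle (g i) (ssum (index_enum 'I_(size w).+1) xpredT
  (fun k => ssum (words X k) xpredT
     (fun eta => sscale (c (a :: eta)) (phibar g eta)))) w).
  rewrite shuffle_sumr; apply: eq_bigr => k _.
  by rewrite shuffle_sumr; apply: eq_bigr => eta _; rewrite shuffle_scaler.
apply: (shuffle_local (n := (size w).+1)) => // u Hu.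
by rewrite [RHS](mixcomp1_widen (lder a c) g Hu).
Qed.

Lemma lder_mixcomp1 c g a : lder a (mixcomp1 c g) =
  if unlift ord0 a is Some i then shuffle (g i) (mixcomp1 (lder a c) g)
  else mixcomp1 (lder a c) g.
Proof.
by apply: funext => w; rewrite /lder mixcomp1_cons; case: (unlift ord0 a).
Qed.

Lemma mixcomp1_clocal n c1 c2 g : eq_below n c1 c2 ->
  eq_below n (mixcomp1 c1 g) (mixcomp1 c2 g).
Proof.
move=> H w Hw; apply: eq_bigr => k _; rewrite !big_seq; apply: eq_bigr => eta Heta.
by rewrite H // (size_words Heta) (leq_ltn_trans _ Hw) // -ltnS.
Qed.

Lemma mixcomp1_glocal n c g1 g2 : (forall i, eq_below n (g1 i) (g2 i)) ->
  eq_below n.+1 (mixcomp1 c g1) (mixcomp1 c g2).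
Proof.
move=> H w Hw; apply: eq_bigr => k _; apply: eq_bigr => eta _.
by rewrite (phibar_local _ H).
Qed.

Lemma mixcomp1_sum I r P F g :
  mixcomp1 (@ssum R X I r P F) g = ssum r P (fun i => mixcomp1 (F i) g).
Proof.
apply: funext => w; rewrite /mixcomp1 /ssum.
under eq_bigr => k _ do under eq_bigr => eta _ do rewrite mulr_suml.
by under eq_bigr => k _ do rewrite exchange_big; rewrite exchange_big.
Qed.

Lemma mixcomp1_scale x c g : mixcomp1 (sscale x c) g = sscale x (mixcomp1 c g).
Proof.
apply: funext => w; rewrite /mixcomp1 /sscale mulr_sumr; apply: eq_bigr => k _.
by rewrite mulr_sumr; apply: eq_bigr => eta _; rewrite mulrA.
Qed.

Lemma mixcomp1_add s t g : mixcomp1 (sadd s t) g = sadd (mixcomp1 s g) (mixcomp1 t g).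
Proof.
apply: funext => w; rewrite /mixcomp1 /sadd -big_split; apply: eq_bigr => k _.
by rewrite -big_split; apply: eq_bigr => eta _; rewrite mulrDl.
Qed.

Lemma mixcomp1_one g : mixcomp1 one g = one.
Proof.
apply: funext => w.
rewrite /mixcomp1 big_ord_recl /= big_seq1 mul1r big1 ?addr0 // => k _.
by rewrite big_allpairs_dep big1 // => b _; rewrite big1 // => eta _; rewrite mul0r.
Qed.

Lemma mixcomp1_shuffle s t g :
  mixcomp1 (shuffle s t) g = shuffle (mixcomp1 s g) (mixcomp1 t g).
Proof.
move: s t; suff E n w : (size w < n)%N -> forall s t,
    mixcomp1 (shuffle s t) g w = shuffle (mixcomp1 s g) (mixcomp1 t g) w.
  by move=> s t; apply: funext => w; apply: E (ltnSn _) s t.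
elim: n w => [//|n IH] [|a w] Hw s t; first by rewrite mixcomp1_nil !shuffle_nil !mixcomp1_nil.
rewrite mixcomp1_cons shuffle_cons !lder_mixcomp1 lder_shuffle mixcomp1_add.
case: (unlift ord0 a) => [i|]; last by rewrite /sadd !IH.
have shuffle_left u v : shuffle u (shuffle (g i) v) = shuffle (g i) (shuffle u v).
  by rewrite -shuffleA (shuffleC u) shuffleA.
rewrite shuffle_addr /sadd shuffleA shuffle_left.
by congr (_ + _); apply: (shuffle_local (n := n)) => // u Hu; apply: IH.
Qed.

Lemma mixcomp1_shpow s g k : mixcomp1 (shpow s k) g = shpow (mixcomp1 s g) k.
Proof.
by elim: k => [|k IH]; rewrite ?mixcomp1_one // !shpowS mixcomp1_shuffle IH.
Qed.

Lemma mixcomp1_shmono q (e : 'I_q -> ser R X) al g :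
  mixcomp1 (shmono e al) g = shmono (fun i => mixcomp1 (e i) g) al.
Proof.
rewrite /shmono; elim: (enum 'I_q) => [|i l IH] /=; first exact: mixcomp1_one.
by rewrite mixcomp1_shuffle IH mixcomp1_shpow.
Qed.

End MixedComposition.

Lemma cmul_box (R : realType) q (d1 d2 : cser R q) (x : mono q) K : (forall i, x i <= K)%N ->
  cmul d1 d2 x = \sum_(a : box q K)
    (if [forall i, (natf a i <= x i)%N] then d1 (natf a) * d2 (msub x (natf a)) else 0).
Proof.
move=> HK; rewrite /cmul big_mkcond /=.
transitivity (\sum_(b : box q (deg x))
    (if [forall i, (natf b i <= x i)%N] then d1 (natf b) * d2 (msub x (natf b)) else 0)).
  apply: eq_bigr => b _.
  have -> : [forall i, (b i <= x i)%N] = [forall i, (natf b i <= x i)%N].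
    by apply: eq_forallb => i; rewrite ffunE.
  by case: ifP => // _; congr (_ * d2 _); apply/ffunP => i; rewrite !ffunE.
apply: (sum_box_resize (G := fun y =>
  if [forall i, (y i <= x i)%N] then d1 y * d2 (msub x y) else 0)) => y.
case: forallP => [Hy _ i|_]; last by rewrite eqxx.
by rewrite (leq_trans (Hy i) (mono_le_deg x i)) (leq_trans (Hy i) (HK i)).
Qed.

Section WienerFliess.
Variable R : realType.
Variable A : finType.
Variable q : nat.
Local Notation one := (@Defs.one R A).
Implicit Types (e : 'I_q -> ser R A) (dj : cser R q).

Definition wfcomp1 dj e : ser R A := fun w =>
  \sum_(a : box q (size w)) dj (natf a) * shmono e (natf a) w.

Lemma wfcompE m (d : 'I_m -> cser R q) e j : wfcomp d e j = wfcomp1 (d j) e.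
Proof. by []. Qed.

Lemma wfcomp1_local n dj e1 e2 : (forall i, eq_below n (e1 i) (e2 i)) ->
  eq_below n (wfcomp1 dj e1) (wfcomp1 dj e2).
Proof.
by move=> H w Hw; apply: eq_bigr => a _; rewrite (shmono_local _ H).
Qed.

Lemma wfcomp1_cone e : wfcomp1 (@cone R q) e = one.
Proof.
apply: funext => w; rewrite /wfcomp1 (bigD1 [ffun => ord0]) //= big1 ?addr0.
  by rewrite natf0 /cone eqxx mul1r shmono0.
move=> a Ha; rewrite /cone; case: eqP => [E|]; last by rewrite mul0r.
by move/natf_inj: (etrans E (esym (natf0 q (size w)))) Ha => ->; rewrite eqxx.
Qed.

Section ProperArgument.
Variable e : 'I_q -> ser R A.
Hypothesis e_proper : proper_ser e.

Lemma shmono_eq0 al w : (size w < deg al)%N -> shmono e al w = 0.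
Proof. by apply: vanishes_below_shmono => i [|a u] //; rewrite e_proper. Qed.

Definition wfcomp1_trunc dj N : ser R A :=
  ssum (index_enum (box q N)) xpredT (fun a => sscale (dj (natf a)) (shmono e (natf a))).

Lemma wfcomp1_widen dj N : eq_below N.+1 (wfcomp1 dj e) (wfcomp1_trunc dj N).
Proof.
move=> w HN; apply: (sum_box_resize (G := fun x => dj x * shmono e x w)) => x nz i.
have Hd : (deg x <= size w)%N.
  by rewrite leqNgt; apply: contra nz => /shmono_eq0 ->; rewrite mulr0.
have Hx := leq_trans (mono_le_deg x i) Hd.
by rewrite Hx (leq_trans Hx HN).
Qed.
Lemma shuffle_wfcomp1 d1 d2 w : shuffle (wfcomp1 d1 e) (wfcomp1 d2 e) w =
  \sum_(a : box q (size w)) \sum_(b : box q (size w))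
    d1 (natf a) * d2 (natf b) * shmono e (madd (natf a) (natf b)) w.
Proof.
transitivity (shuffle (wfcomp1_trunc d1 (size w)) (wfcomp1_trunc d2 (size w)) w).
  by apply: (shuffle_local (n := (size w).+1)) => //; apply: wfcomp1_widen.
rewrite shuffle_suml /ssum; apply: eq_bigr => a _.
rewrite shuffle_scalel shuffle_sumr /sscale /ssum mulr_sumr; apply: eq_bigr => b _.
by rewrite shuffle_scaler -shmonoD /sscale mulrA.
Qed.

Lemma wfcomp1_cmul d1 d2 w : wfcomp1 (cmul d1 d2) e w =
  \sum_(a : box q (size w)) \sum_(b : box q (size w))
    d1 (natf a) * d2 (natf b) * shmono e (madd (natf a) (natf b)) w.
Proof.
pose term (a b c : box q (size w)) := if natf c == madd (natf a) (natf b)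
  then d1 (natf a) * d2 (natf b) * shmono e (natf c) w else 0.
transitivity (\sum_a \sum_b \sum_c term a b c); last first.
  apply: eq_bigr => a _; apply: eq_bigr => b _.
  rewrite (sum_box_eq _ _ (fun y => d1 (natf a) * d2 (natf b) * shmono e y w)).
  case: forallP => // /forallP; rewrite negb_forall => /existsP[i]; rewrite -ltnNge => Hi.
  by rewrite shmono_eq0 ?mulr0 // (leq_trans Hi (mono_le_deg _ i)).
rewrite [RHS](eq_bigr (fun a => \sum_c \sum_b term a b c)) => [|a _]; last exact: exchange_big.
rewrite [RHS]exchange_big /=; apply: eq_bigr => c _.
rewrite (cmul_box _ _ (natf_le c)) mulr_suml; apply: eq_bigr => a _.
rewrite /term; under eq_bigr => b _ do rewrite eq_madd.
case: ifP => Hac; last by rewrite mul0r big1 // => b _; rewrite Hac.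
transitivity (\sum_(b : box q (size w)) if natf b == msub (natf c) (natf a)
    then d1 (natf a) * d2 (natf b) * shmono e (natf c) w else 0).
  rewrite (sum_box_eq _ _ (fun y => d1 (natf a) * d2 y * shmono e (natf c) w)).
  case: forallP => // H; case: H => i.
  by rewrite ffunE (leq_trans (leq_subr _ _) (natf_le c i)).
by apply: eq_bigr => b _; case: ifP.
Qed.

Lemma wfcomp1_shuffle d1 d2 :
  shuffle (wfcomp1 d1 e) (wfcomp1 d2 e) = wfcomp1 (cmul d1 d2) e.
Proof. by apply: funext => w; rewrite shuffle_wfcomp1 wfcomp1_cmul. Qed.

End ProperArgument.
End WienerFliess.

Section LocalFixpoint.
Variables (I T V : Type) (sz : T -> nat).
Variable Phi : (I -> T -> V) -> I -> T -> V.
Hypothesis Phi_local : forall h1 h2 i x,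
  (forall j y, (sz y < sz x)%N -> h1 j y = h2 j y) -> Phi h1 i x = Phi h2 i x.

Lemma local_fixpoint_unique h1 h2 : Phi h1 = h1 -> Phi h2 = h2 -> h1 = h2.
Proof.
move=> E1 E2; apply: funext => i; apply: funext => x.
elim: (sz x).+1 {-2}x i (ltnSn (sz x)) => [//|n IH] y i Hy.
by rewrite -E1 -E2; apply: Phi_local => j z Hz; apply: IH; apply: leq_trans Hz Hy.
Qed.

(* The n-th iterate is already exact on arguments of size < n. *)
Lemma local_fixpoint_exists (h0 : I -> T -> V) : exists h, Phi h = h.
Proof.
pose hn n := iter n Phi h0.
have stable n k i x : (sz x < n)%N -> (n <= k)%N -> hn k i x = hn n i x.
  elim: n k i x => [//|n IH] [//|k] i x Hx Hk /=.
  by apply: Phi_local => j y Hy; apply: IH => //; apply: leq_trans Hy Hx.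
exists (fun i x => hn (sz x).+1 i x); apply: funext => i; apply: funext => x.
transitivity (Phi (hn (sz x).+1) i x); last exact: (stable (sz x).+1 (sz x).+2).
by apply: Phi_local => j y Hy; symmetry; apply: stable => //; apply: ltnW.
Qed.

End LocalFixpoint.

Section CauchyInverse.
Variables (R : realType) (q l : nat) (d : 'I_l -> cser R q).
Hypothesis d_purely_improper : cpurely_improper d.

(* Solve (d_j h_j)_a = d_j(0) h_j(a) + \sum_(0 < b <= a) d_j(b) h_j(a - b) = cone a for h_j(a). *)
Definition cinv_step (h : 'I_l -> cser R q) j : cser R q := fun a =>
  (@cone R q a - \sum_(b : box q (deg a) | [forall i, (b i <= a i)%N] && (b != [ffun => ord0]))
      d j (natf b) * h j [ffun i => (a i - b i)%N]) / d j [ffun => 0%N].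

Lemma cinv_step_local h1 h2 j a : (forall k y, (deg y < deg a)%N -> h1 k y = h2 k y) ->
  cinv_step h1 j a = cinv_step h2 j a.
Proof.
move=> H; congr ((_ - _) / _); apply: eq_bigr => b /andP[/forallP Hb Hb0].
congr (_ * _); apply: H.
have -> : [ffun i => (a i - b i)%N] = msub a (natf b) by apply/ffunP => i; rewrite !ffunE.
have Hle i : (natf b i <= a i)%N by rewrite ffunE.
have pos : (0 < deg (natf b))%N.
  rewrite lt0n; apply: contra Hb0 => /eqP deg0; apply/eqP/ffunP => i.
  apply: val_inj; rewrite ffunE /=; apply/eqP.
  by have := mono_le_deg (natf b) i; rewrite ffunE deg0 leqn0.
move: (deg_msub Hle) pos; move: (deg (msub _ _)) (deg (natf b)) => X Y; lia.
Qed.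

Lemma cmul_cinv j : cmul (d j) (cinv d j) = @cone R q.
Proof.
apply: (epsilon_spec _ (fun h => cmul (d j) h = @cone R q)).
have [h Eh] := local_fixpoint_exists cinv_step_local (fun _ _ => 0).
exists (h j); apply: funext => a.
rewrite /cmul (bigD1 [ffun => ord0]) /=; last by apply/forallP => i; rewrite ffunE.
rewrite natf0.
have -> : [ffun i => (a i - ([ffun => ord0] : box q (deg a)) i)%N] = a.
  by apply/ffunP => i; rewrite !ffunE subn0.
by rewrite -{1}Eh /cinv_step mulrC divfK ?subrK ?d_purely_improper.
Qed.

End CauchyInverse.

Section Compositions.
Variables (R : realType) (m : nat).
Local Notation X := 'I_m.+1.
Local Notation one := (@Defs.one R X).

Lemma shinv_eq l (g h : 'I_l -> ser R X) :
  (forall j, shuffle (h j) (g j) = one) -> shinv g = h.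
Proof.
move=> hg; apply: funext => j.
have gh : shuffle (g j) (shinv g j) = one.
  by apply: (epsilon_spec _ (fun s => shuffle (g j) s = one)); exists (h j); rewrite shuffleC.
by rewrite -[shinv g j]shuffle1s -(hg j) shuffleA gh shuffleC shuffle1s.
Qed.

Lemma mixcomp_proper q (c : 'I_q -> ser R X) g : proper_ser c -> proper_ser (mixcomp c g).
Proof. by move=> Hc j; rewrite mixcompE mixcomp1_nil. Qed.

Lemma mixcomp1_wfcomp1 q dj (e : 'I_q -> ser R X) g : proper_ser e ->
  mixcomp1 (wfcomp1 dj e) g = wfcomp1 dj (fun i => mixcomp1 (e i) g).
Proof.
move=> He; apply: funext => w.
transitivity (mixcomp1 (wfcomp1_trunc e dj (size w)) g w).
  by apply: (mixcomp1_clocal (n := (size w).+1)) => //; apply: wfcomp1_widen.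
by rewrite mixcomp1_sum; apply: eq_bigr => a _; rewrite mixcomp1_scale mixcomp1_shmono.
Qed.

Lemma wfcomp_mixcomp q l (d : 'I_l -> cser R q) (c : 'I_q -> ser R X) g :
  proper_ser c -> wfcomp d (mixcomp c g) = mixcomp (wfcomp d c) g.
Proof.
move=> Hc; apply: funext => j; rewrite mixcompE !wfcompE mixcomp1_wfcomp1 //.
by congr wfcomp1; apply: funext => i; rewrite mixcompE.
Qed.

Lemma mixcomp_local q (c : 'I_q -> ser R X) h1 h2 i w :
  (forall j u, (size u < size w)%N -> h1 j u = h2 j u) ->
  mixcomp c h1 i w = mixcomp c h2 i w.
Proof. by move=> H; rewrite !mixcompE; apply: (mixcomp1_glocal (n := size w)). Qed.

Lemma compinvE (g : 'I_m -> ser R X) : compinv g = mixcomp (shinv g) (compinv g).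
Proof.
apply: (epsilon_spec _ (fun h => h = mixcomp (shinv g) h)).
have [h Eh] := local_fixpoint_exists (@mixcomp_local _ (shinv g)) (fun _ _ => 0).
by exists h.
Qed.

Lemma mixcomp_wfcomp_fixpoint_unique q (c : 'I_q -> ser R X) (d : 'I_m -> cser R q) e1 e2 :
  e1 = mixcomp c (wfcomp d e1) -> e2 = mixcomp c (wfcomp d e2) -> e1 = e2.
Proof.
have local h1 h2 i w : (forall j u, (size u < size w)%N -> h1 j u = h2 j u) ->
    mixcomp c (wfcomp d h1) i w = mixcomp c (wfcomp d h2) i w.
  by move=> H; apply: mixcomp_local => j u Hu; apply: (wfcomp1_local (n := size w)).
by move=> E1 E2; apply: (local_fixpoint_unique local).
Qed.

End Compositions.

Theorem theorem17 (R : realType) (m q : nat)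
  (c : 'I_q -> ser R 'I_m.+1) (d : 'I_m -> cser R q) :
  proper_ser c -> cpurely_improper d ->
  let f := mixcomp c (compinv (wfcomp (cinv d) c)) in
  proper_ser f /\
  f = mixcomp c (wfcomp d f) /\
  (forall e : 'I_q -> ser R 'I_m.+1,
      proper_ser e -> e = mixcomp c (wfcomp d e) -> e = f).
Proof.
move=> c_proper d_improper f.
set g := wfcomp (cinv d) c.
have shinv_g : shinv g = wfcomp d c.
  apply: shinv_eq => j; rewrite !wfcompE wfcomp1_shuffle //.
  by rewrite (cmul_cinv d_improper) wfcomp1_cone.
have wfcomp_f : wfcomp d f = compinv g.
  by rewrite wfcomp_mixcomp // -shinv_g -compinvE.
have f_fixed : f = mixcomp c (wfcomp d f) by rewrite wfcomp_f.
split; first exact: mixcomp_proper.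
split=> // e _ e_fixed; exact: mixcomp_wfcomp_fixpoint_unique e_fixed f_fixed.
Qed.
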